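(* Let $R$ be a commutative ring which either has finitely many maximal ideals or whose set of minimal prime ideals $\operatorname{Min}(R)$ is quasi-compact in the Zariski topology. Then the following are equivalent: (i) $R$ is a GPP-ring; (ii) $R$ is a GPF-ring; (iii) $R$ is a quasi p.f. ring.
   Context: $R$ is a GPP-ring (resp. GPF-ring) if for each $f\in R$ there is $n\geq1$ with $Rf^n$ a projective (resp. flat) $R$-module. An ideal $I$ is quasi-pure if for each $f\in I$ there is $g\in I$ with $f(1-g)$ nilpotent; $R$ is a quasi p.f. ring if $\operatorname{Ann}(f)$ is quasi-pure for all $f\in R$. *)

From mathcomp Require Import all_boot all_order all_algebra.
Set Implicit Arguments. Unset Strict Implicit. Unset Printing Implicit Defensive.
Import GRing.Theory.
Local Open Scope ring_scope.

Section Defs.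
Variable R : comPzRingType.

Definition nilpotent (x : R) : Prop := exists k : nat, x ^+ k = 0.

Definition is_ideal (I : R -> Prop) : Prop :=
  [/\ I 0, (forall x y, I x -> I y -> I (x + y)) & (forall r x, I x -> I (r * x))].

Definition prime_ideal (P : R -> Prop) : Prop :=
  [/\ is_ideal P, ~ P 1 & (forall a b, P (a * b) -> P a \/ P b)].

Definition maximal_ideal (M : R -> Prop) : Prop :=
  [/\ is_ideal M, ~ M 1 &
      (forall J, is_ideal J -> (forall x, M x -> J x) -> (forall x, J x <-> M x) \/ J 1)].

Definition minimal_prime (P : R -> Prop) : Prop :=
  prime_ideal P /\
  (forall Q, prime_ideal Q -> (forall x, Q x -> P x) -> forall x, P x <-> Q x).

Definition finitely_many_maximal : Prop :=
  exists (n : nat) (F : nat -> R -> Prop),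
    forall M, maximal_ideal M -> exists k, (k < n)%N /\ forall x, M x <-> F k x.

(* Open subsets of Min(R) for the (subspace) Zariski topology:
   complements of the closed sets V(E) = {P | E ⊆ P}, intersected with Min(R). *)
Definition Min_open (U : (R -> Prop) -> Prop) : Prop :=
  exists E : R -> Prop, forall P, minimal_prime P ->
    (U P <-> exists a, E a /\ ~ P a).

Definition Min_quasi_compact : Prop :=
  forall (I : Type) (U : I -> (R -> Prop) -> Prop),
    (forall i, Min_open (U i)) ->
    (forall P, minimal_prime P -> exists i, U i P) ->
    exists (n : nat) (g : nat -> I),
      forall P, minimal_prime P -> exists k, (k < n)%N /\ U (g k) P.

Definition pideal (f : R) (n : nat) : R -> Prop := fun x => exists r, x = r * f ^+ n.

Definition Ann (f : R) : R -> Prop := fun g => g * f = 0.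

Definition quasi_pure (I : R -> Prop) : Prop :=
  forall f, I f -> exists g, I g /\ nilpotent (f * (1 - g)).

(* An R-linear map from the ideal I (as an R-module) to N, represented by a
   function R -> N whose values outside I are irrelevant. *)
Definition lin_on (I : R -> Prop) (N : lmodType R) (h : R -> N) : Prop :=
  forall a x y, I x -> I y -> h (a * x + y) = a *: h x + h y.

Definition projective_ideal (I : R -> Prop) : Prop :=
  forall (M N : lmodType R) (g : {linear M -> N}),
    (forall y, exists x, g x = y) ->
    forall h : R -> N, lin_on I h ->
      exists k : R -> M, lin_on I k /\ forall x, I x -> g (k x) = h x.

Definition bilin_on (I : R -> Prop) (N P : lmodType R) (b : N -> R -> P) : Prop :=
  (forall y, I y -> forall a (x1 x2 : N), b (a *: x1 + x2) y = a *: b x1 y + b x2 y)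
  /\ (forall x, lin_on I (b x)).

(* Flatness of the ideal I: for every injective linear u : N' -> N, the map
   u (x) 1 : N' (x) I -> N (x) I is injective.  An element sum_i x_i (x) m_i of
   a tensor product is zero iff it is killed by every bilinear map (universal
   property), which is how the tensor products are expressed here. *)
Definition flat_ideal (I : R -> Prop) : Prop :=
  forall (N' N : lmodType R) (u : {linear N' -> N}), injective u ->
  forall (n : nat) (x : 'I_n -> N') (m : 'I_n -> R), (forall i, I (m i)) ->
    (forall (P : lmodType R) (b : N -> R -> P), bilin_on I b ->
        \sum_(i < n) b (u (x i)) (m i) = 0) ->
    (forall (P : lmodType R) (b : N' -> R -> P), bilin_on I b ->
        \sum_(i < n) b (x i) (m i) = 0).

Definition GPP_ring : Prop :=
  forall f : R, exists n : nat, (1 <= n)%N /\ projective_ideal (pideal f n).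

Definition GPF_ring : Prop :=
  forall f : R, exists n : nat, (1 <= n)%N /\ flat_ideal (pideal f n).

Definition quasi_pf_ring : Prop := forall f : R, quasi_pure (Ann f).

End Defs.

(* Write [D(g)] for the set of minimal primes avoiding [g].  The ideal R f^n is
   projective as soon as some [e] satisfies [e f^n = f^n] and
   [Ann(f^n) <= Ann(e)], and then it is flat as well; projectivity gives such
   an [e] by lifting R f^n ~= R/Ann(f^n) along R -> R/Ann(f^n).  Flatness
   of R f^n makes Ann(f^n) pure, i.e. [a f^n = 0] implies [a = a t] with
   [t f^n = 0], which is the quasi p.f. condition for the element [a].
   Conversely, in a quasi p.f. ring every minimal prime containing [f] lies in
   some [D(g)] with [g (1 - h)] nilpotent for an [h] killing a power of [f].
   Finitely many such [D(g)] and [D(f)] cover Min(R), and the product [x] of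
   the corresponding [1 - h] satisfies [(1 - x) f^n = 0] with [x (1 - x)]
   nilpotent.  An idempotent lifting [x] modulo the nilradical is the required
   [e].  If R has finitely many maximal ideals, Min(R) is finite because
   distinct minimal primes of a quasi p.f. ring are comaximal. *)

From HB Require Import structures.
From mathcomp Require Import all_boot all_order all_algebra.
From mathcomp Require Import boolp classical_sets.
From mathcomp Require Import ring.
Set Implicit Arguments. Unset Strict Implicit. Unset Printing Implicit Defensive.
Import GRing.Theory.
Local Open Scope ring_scope.
Local Open Scope quotient_scope.

Section IdealFacts.
Variable R : comPzRingType.
Implicit Types (I P : R -> Prop) (a b c r x y : R).

Lemma ideal0 I : is_ideal I -> I 0. Proof. by case. Qed.

Lemma idealD I x y : is_ideal I -> I x -> I y -> I (x + y).
Proof. by case=> _ + _; apply. Qed.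

Lemma idealM I r x : is_ideal I -> I x -> I (r * x).
Proof. by case=> _ _; apply. Qed.

Lemma idealMr I r x : is_ideal I -> I x -> I (x * r).
Proof. by rewrite mulrC; apply: idealM. Qed.

Lemma idealN I x : is_ideal I -> I x -> I (- x).
Proof. by rewrite -mulN1r; apply: idealM. Qed.

Lemma Ann_ideal c : is_ideal (Ann c).
Proof.
rewrite /Ann; split=> [|x y xc0 yc0|r x xc0]; first exact: mul0r.
  by rewrite mulrDl xc0 yc0 addr0.
by rewrite -mulrA xc0 mulr0.
Qed.

Lemma prime_ideal_ideal P : prime_ideal P -> is_ideal P. Proof. by case. Qed.

Lemma prime_ideal_proper P : prime_ideal P -> ~ P 1. Proof. by case. Qed.

Lemma prime_idealM P a b : prime_ideal P -> P (a * b) -> P a \/ P b.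
Proof. by case=> _ _; apply. Qed.

Lemma prime_idealX P x k : prime_ideal P -> P (x ^+ k) -> P x.
Proof.
move=> HP; elim: k => [|k IHk]; first by rewrite expr0 => /(prime_ideal_proper HP).
by rewrite exprS => /(prime_idealM HP) [].
Qed.

Lemma prime_ideal_nilpotent P x : prime_ideal P -> nilpotent x -> P x.
Proof.
move=> HP [k xk0]; apply: (@prime_idealX _ _ k HP).
by rewrite xk0; apply: ideal0; apply: prime_ideal_ideal.
Qed.

End IdealFacts.

(* Bundling an ideal with its proof lets the quotient module R/I be canonical. *)
Record ring_ideal (R : comPzRingType) :=
  RingIdeal { ideal_set :> R -> Prop; ideal_setP : is_ideal ideal_set }.

Section QuotientModule.
Variables (R : comPzRingType) (I : ring_ideal R).

Definition ideal_pred : {pred R} := fun x => `[< I x >].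

Lemma ideal_pred_zmod_closed : zmod_closed ideal_pred.
Proof.
have HI := ideal_setP I.
split=> [|x y /asboolP Ix /asboolP Iy]; apply/asboolP; first exact: ideal0.
by apply: idealD => //; apply: idealN.
Qed.

HB.instance Definition _ :=
  GRing.isZmodClosed.Build R ideal_pred ideal_pred_zmod_closed.

Local Notation Q := (Quotient.quot ideal_pred).

Lemma quot_eq x y : \pi_Q x = \pi_Q y <-> I (x - y).
Proof.
split=> [/eqP|Ixy]; last by apply/eqP; rewrite -Quotient.idealrBE; apply/asboolP.
by rewrite -Quotient.idealrBE => /asboolP.
Qed.

Lemma quot_piD x y : \pi_Q (x + y) = \pi_Q x + \pi_Q y.
Proof. exact: Quotient.pi_add. Qed.

Lemma quot_surj (q : Q) : exists x, q = \pi_Q x.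
Proof. by exists (repr q); rewrite reprK. Qed.

Definition quot_scale (a : R) (q : Q) : Q := \pi_Q (a * repr q).

Lemma quot_scale_pi a x : quot_scale a (\pi_Q x) = \pi_Q (a * x).
Proof.
apply/quot_eq; rewrite -mulrBr; apply: (idealM _ (ideal_setP I)).
by apply/quot_eq; rewrite reprK.
Qed.

Lemma quot_scaleA a b q : quot_scale a (quot_scale b q) = quot_scale (a * b) q.
Proof. by have [x ->] := quot_surj q; rewrite !quot_scale_pi mulrA. Qed.

Lemma quot_scale1 : left_id 1 quot_scale.
Proof. by move=> q; have [x ->] := quot_surj q; rewrite quot_scale_pi mul1r. Qed.

Lemma quot_scaleDr : right_distributive quot_scale +%R.
Proof.
move=> a q q'; have [x ->] := quot_surj q; have [y ->] := quot_surj q'.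
by rewrite -quot_piD !quot_scale_pi mulrDr quot_piD.
Qed.

Lemma quot_scaleDl q : {morph quot_scale^~ q : a b / a + b}.
Proof.
move=> a b; have [x ->] := quot_surj q.
by rewrite !quot_scale_pi mulrDl quot_piD.
Qed.

HB.instance Definition _ := GRing.Zmodule_isLmodule.Build R Q
  quot_scaleA quot_scale1 quot_scaleDr quot_scaleDl.

Definition quot_proj (x : R^o) : Q := \pi_Q x.

Lemma quot_proj_linear : linear quot_proj.
Proof.
by move=> a x y; rewrite /quot_proj quot_piD; congr (_ + _); rewrite -quot_scale_pi.
Qed.

HB.instance Definition _ :=
  GRing.isLinear.Build R R^o Q *:%R quot_proj quot_proj_linear.

Lemma quot_proj_surj (q : Q) : exists x, quot_proj x = q.
Proof. by have [x ->] := quot_surj q; exists x. Qed.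

Lemma quot_proj_eq0 x : quot_proj x = 0 <-> I x.
Proof. by rewrite -(raddf0 quot_proj) /quot_proj quot_eq subr0. Qed.

End QuotientModule.

Definition Ann_rideal (R : comPzRingType) (c : R) : ring_ideal R :=
  RingIdeal (Ann_ideal c).

Lemma add_self_eq0 (V : zmodType) (v : V) : v = v + v -> v = 0.
Proof. by move/esym/(canRL (addrK v)); rewrite subrr. Qed.

Section PrincipalIdealModules.
Variable R : comPzRingType.
Implicit Types (a c e f r t x y : R) (I : R -> Prop).

Lemma lin_on0 I (N : lmodType R) (h : R -> N) : I 0 -> lin_on I h -> h 0 = 0.
Proof.
move=> I0 hlin; apply: add_self_eq0.
by have := hlin 1 0 0 I0 I0; rewrite mulr0 addr0 scale1r.
Qed.

Lemma lin_onZ I (N : lmodType R) (h : R -> N) a x :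
  I 0 -> I x -> lin_on I h -> h (a * x) = a *: h x.
Proof.
move=> I0 Ix hlin.
by have := hlin a x 0 Ix I0; rewrite !addr0 (lin_on0 I0 hlin) addr0.
Qed.

Section Bilinear.
Variables (I : R -> Prop) (N P : lmodType R) (b : N -> R -> P) (y : R).
Hypotheses (bbil : bilin_on I b) (Iy : I y).

Lemma bilin_on0l : b 0 y = 0.
Proof.
by apply: add_self_eq0; have := bbil.1 y Iy 1 0 0; rewrite !scale1r !addr0.
Qed.

Lemma bilin_onDl (x1 x2 : N) : b (x1 + x2) y = b x1 y + b x2 y.
Proof. by have := bbil.1 y Iy 1 x1 x2; rewrite !scale1r. Qed.

Lemma bilin_onZl a (x : N) : b (a *: x) y = a *: b x y.
Proof. by have := bbil.1 y Iy a x 0; rewrite !addr0 bilin_on0l addr0. Qed.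

End Bilinear.

Lemma pideal0 f n : pideal f n 0.
Proof. by exists 0; rewrite mul0r. Qed.

Lemma pideal_exp f n : pideal f n (f ^+ n).
Proof. by exists 1; rewrite mul1r. Qed.

Lemma pidealP f n a x y : pideal f n x -> pideal f n y -> pideal f n (a * x + y).
Proof. by move=> [r ->] [s ->]; exists (a * r + s); rewrite mulrDl mulrA. Qed.

Definition pideal_coef f n x : R := xget 0 [set r | x = r * f ^+ n].

Lemma pideal_coefP f n x : pideal f n x -> x = pideal_coef f n x * f ^+ n.
Proof. exact: xgetPex. Qed.

Lemma pideal_coef_linear f n a x y : pideal f n x -> pideal f n y ->
  Ann (f ^+ n)
    (pideal_coef f n (a * x + y) - (a * pideal_coef f n x + pideal_coef f n y)).
Proof.
move=> Ix Iy; rewrite /Ann mulrBl -(pideal_coefP (pidealP a Ix Iy)).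
by rewrite mulrDl -mulrA -(pideal_coefP Ix) -(pideal_coefP Iy) subrr.
Qed.

(* The second condition makes [r f^n |-> r e] a well-defined section of
   [r |-> r f^n : R -> R f^n]. *)
Definition pideal_split f n : Prop :=
  exists e, e * f ^+ n = f ^+ n /\ forall r, Ann (f ^+ n) r -> Ann e r.

Lemma pideal_split_section f n e : (forall r, Ann (f ^+ n) r -> Ann e r) ->
  lin_on (pideal f n) (fun x => pideal_coef f n x * e : R^o).
Proof.
move=> Ae a x y Ix Iy; have := Ae _ (pideal_coef_linear a Ix Iy).
by rewrite /Ann mulrBl => /eqP; rewrite subr_eq0 => /eqP ->; rewrite mulrDl -mulrA.
Qed.

Lemma pideal_split_projective f n : pideal_split f n -> projective_ideal (pideal f n).
Proof.
move=> [e [efn Ae]] M N g gsurj h hlin.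
have [m0 gm0] := gsurj (h (f ^+ n)).
exists (fun x => (pideal_coef f n x * e) *: m0); split.
  move=> a x y Ix Iy /=.
  by have /= -> := pideal_split_section Ae a Ix Iy; rewrite scalerDl scalerA.
move=> x Ix; rewrite linearZ gm0 /=.
rewrite -(lin_onZ _ (pideal0 f n) (pideal_exp f n) hlin) -mulrA efn.
by rewrite -pideal_coefP.
Qed.

Lemma pideal_split_flat f n : pideal_split f n -> flat_ideal (pideal f n).
Proof.
move=> [e [efn Ae]] N' N u uinj k x m Im Hu P b bbil.
have slin := pideal_split_section Ae.
have I0 := pideal0 f n; have Ifn := pideal_exp f n.
pose s i := pideal_coef f n (m i) * e.
have sx0 : \sum_(i < k) s i *: x i = 0.
  apply: uinj; rewrite linear0 linear_sum.
  rewrite -[RHS](Hu N (fun (y : N) r => (pideal_coef f n r * e) *: y)).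
    by apply: eq_bigr => i _; rewrite linearZ.
  split.
    by move=> r Ir a y1 y2; rewrite scalerDr !scalerA mulrC.
  move=> y a r1 r2 I1 I2 /=.
  by have /= -> := slin a r1 r2 I1 I2; rewrite scalerDl scalerA.
transitivity (\sum_(i < k) b (s i *: x i) (f ^+ n)).
  apply: eq_bigr => i _; rewrite (bilin_onZl bbil Ifn).
  have -> : m i = s i * f ^+ n by rewrite /s -mulrA efn -pideal_coefP.
  exact: (lin_onZ _ I0 Ifn (bbil.2 (x i))).
rewrite -(big_morph _ (bilin_onDl bbil Ifn) (bilin_on0l bbil Ifn)) sx0.
exact: bilin_on0l bbil Ifn.
Qed.

Lemma projective_pideal_split f n : projective_ideal (pideal f n) -> pideal_split f n.
Proof.
move=> Hproj; pose A := Ann_rideal (f ^+ n).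
have I0 := pideal0 f n; have Ifn := pideal_exp f n.
have hlin : lin_on (pideal f n) (fun x => quot_proj A (pideal_coef f n x)).
  move=> a x y Ix Iy; rewrite -linearP /quot_proj; apply/quot_eq.
  exact: pideal_coef_linear.
have [k [klin kP]] := Hproj _ _ (quot_proj A) (@quot_proj_surj _ A) _ hlin.
exists (k (f ^+ n)); split.
  have := kP _ Ifn; rewrite /quot_proj => /quot_eq.
  by rewrite /= /Ann mulrBl -pideal_coefP // => /eqP; rewrite subr_eq0 => /eqP.
move=> r rfn; have := klin r _ _ Ifn I0.
by rewrite rfn addr0 (lin_on0 I0 klin) addr0 => /esym.
Qed.

End PrincipalIdealModules.

Section MulQuotAnn.
Variables (R : comPzRingType) (a : R).
Local Notation Q := (Quotient.quot (ideal_pred (Ann_rideal a))).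

Definition mul_quot_Ann (q : Q) : R^o := repr q * a.

Lemma mul_quot_Ann_pi x : mul_quot_Ann (\pi_Q x) = x * a.
Proof.
apply/eqP; rewrite /mul_quot_Ann -subr_eq0 -mulrBl; apply/eqP.
by apply/(quot_eq (Ann_rideal a)); rewrite reprK.
Qed.

Lemma mul_quot_Ann_linear : linear mul_quot_Ann.
Proof.
move=> c q1 q2; have [x1 ->] := quot_surj q1; have [x2 ->] := quot_surj q2.
rewrite -[\pi_Q x1]/(quot_proj _ x1) -[\pi_Q x2]/(quot_proj _ x2) -linearP.
rewrite /quot_proj !mul_quot_Ann_pi mulrDl; congr (_ + _); exact: esym (mulrA _ _ _).
Qed.

HB.instance Definition _ :=
  GRing.isLinear.Build R Q R^o *:%R mul_quot_Ann mul_quot_Ann_linear.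

Lemma mul_quot_Ann_inj : injective mul_quot_Ann.
Proof.
move=> q1 q2; have [x1 ->] := quot_surj q1; have [x2 ->] := quot_surj q2.
by rewrite !mul_quot_Ann_pi => x12; apply/quot_eq; rewrite /= /Ann mulrBl x12 subrr.
Qed.

End MulQuotAnn.

Section FlatPrincipalIdeals.
Variable R : comPzRingType.
Implicit Types (a c f g r t x y : R).

Definition mul_Ann a c : R -> Prop := fun x => exists t, Ann c t /\ x = a * t.

Lemma mul_Ann_ideal a c : is_ideal (mul_Ann a c).
Proof.
have [A0 AD AM] := Ann_ideal c.
split=> [|_ _ [t [At ->]] [s [As ->]]|r _ [t [At ->]]].
- by exists 0; rewrite mulr0.
- by exists (t + s); rewrite mulrDr; split=> //; apply: AD.
- by exists (r * t); rewrite mulrCA; split=> //; apply: AM.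
Qed.

(* The tensor [a (x) f^n = 1 (x) a f^n] vanishes in R (x) R f^n and is the
   image of [1 (x) f^n] under the injection R/Ann a -> R, [x |-> x a]; by
   flatness [1 (x) f^n] vanishes in (R/Ann a) (x) R f^n.  The bilinear map
   [(x, r f^n) |-> x a r] into R/(a Ann(f^n)) turns this into [a = a t] for
   some [t] in Ann(f^n). *)
Lemma flat_pideal_Ann_pure f n a : flat_ideal (pideal f n) -> Ann (f ^+ n) a ->
  exists t, Ann (f ^+ n) t /\ a = a * t.
Proof.
move=> Hflat afn; pose K := RingIdeal (mul_Ann_ideal a (f ^+ n)).
have I0 := pideal0 f n; have Ifn := pideal_exp f n.
pose u := @mul_quot_Ann _ a.
have uK : forall (P : lmodType R) (b : R^o -> R -> P), bilin_on (pideal f n) b ->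
    \sum_(i < 1) b (u (quot_proj (Ann_rideal a) 1)) (f ^+ n) = 0.
  move=> P b bbil; rewrite big_ord1 /u /quot_proj mul_quot_Ann_pi mul1r.
  rewrite -[a]mulr1 (bilin_onZl bbil Ifn) -(lin_onZ _ I0 Ifn (bbil.2 1)) afn.
  exact: lin_on0 I0 (bbil.2 1).
pose b q y := quot_proj K (u q * pideal_coef f n y).
have bbil : bilin_on (pideal f n) b.
  split=> [y Iy c q1 q2 | q c y1 y2 I1 I2]; rewrite /b.
    rewrite /u linearP mulrDl -mulrA; exact: (linearP (quot_proj K) c).
  rewrite -linearP /quot_proj; apply/quot_eq.
  exists (repr q * (pideal_coef f n (c * y1 + y2) -
                    (c * pideal_coef f n y1 + pideal_coef f n y2))).
  split; first by rewrite /Ann -mulrA pideal_coef_linear // mulr0.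
  by rewrite /u /mul_quot_Ann -[c *: _]/(c * _); ring.
have := Hflat _ _ u (@mul_quot_Ann_inj _ a) 1 _ _ (fun=> Ifn) uK _ b bbil.
rewrite big_ord1 /b /u /quot_proj mul_quot_Ann_pi mul1r.
move=> /(quot_proj_eq0 K) [t [tfn at_]].
exists (t - pideal_coef f n (f ^+ n) + 1); split.
  by rewrite /Ann !mulrDl mulNr -pideal_coefP // tfn mul1r sub0r addNr.
by rewrite !mulrDr mulrN -at_ subrr add0r mulr1.
Qed.

Lemma GPP_GPF : GPP_ring R -> GPF_ring R.
Proof.
move=> HP f; have [n [n_gt0 Hn]] := HP f; exists n; split=> //.
exact/pideal_split_flat/projective_pideal_split.
Qed.

Lemma GPF_quasi_pf : GPF_ring R -> quasi_pf_ring R.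
Proof.
move=> HF f g gf; have [n [n_gt0 Hn]] := HF g.
have fgn : Ann (g ^+ n) f.
  by rewrite /Ann -(prednK n_gt0) exprS mulrA [f * g]mulrC gf mul0r.
have [t [tgn ftf]] := flat_pideal_Ann_pure Hn fgn.
exists (1 - t); split; first by rewrite /Ann mulrBl mul1r [t * f]mulrC -ftf subrr.
exists n; rewrite opprB addrC subrK exprMn.
have -> : t ^+ n = t ^+ n.-1 * t by rewrite -exprSr prednK.
by rewrite mulrCA [g ^+ n * t]mulrC tgn mulr0.
Qed.

End FlatPrincipalIdeals.

Local Open Scope classical_set_scope.

Lemma Zorn_bigcup_above T (Phi : set T -> Prop) (X0 : set T) : Phi X0 ->
  (forall F : set (set T), (forall X, F X -> Phi X /\ X0 `<=` X) ->
     total_on F subset -> (exists X, F X) -> Phi (\bigcup_(X in F) X)) ->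
  exists A, [/\ Phi A, X0 `<=` A & forall B, A `<=` B -> Phi B -> B `<=` A].
Proof.
move=> PhiX0 Phi_chain.
have [|A [PhiA Amax]] := @Zorn_bigcup T (fun X => Phi (X `|` X0)).
  move=> F FPhi Ftot.
  have [[X FX]|F0] := pselect (exists X, F X); last first.
    suff -> : \bigcup_(X in F) X `|` X0 = X0 by [].
    by apply/setUidr => x [Y FY _]; case: F0; exists Y.
  have -> : \bigcup_(Y in F) Y `|` X0 = \bigcup_(Y in [set Y `|` X0 | Y in F]) Y.
    apply/seteqP; split=> x.
      case=> [[Y FY Yx]|X0x]; first by exists (Y `|` X0); [exists Y | left].
      by exists (X `|` X0); [exists X | right].
    by move=> [_ [Y FY <-]] [Yx|X0x]; [left; exists Y | right].
  apply: Phi_chain; last by exists (X `|` X0), X.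
    by move=> _ [Y FY <-]; split; [exact: FPhi | exact: subsetUr].
  move=> _ _ [Y1 F1 <-] [Y2 F2 <-].
  by case: (Ftot _ _ F1 F2) => Y12; [left|right]; apply: setSU.
have X0A : X0 `<=` A.
  move=> x X0x; apply: contrapT => nAx.
  apply: (Amax (A `|` X0)); last by rewrite -setUA setUid.
  by split=> [|AX0]; [exact: subsetUl | apply: nAx; apply: AX0; right].
exists A; split=> //; first by rewrite -(setUidl X0A).
move=> B AB PhiB x Bx; apply: contrapT => nAx.
apply: (Amax B); first by split=> // BA; apply: nAx; apply: BA.
by rewrite setUidl //; apply: subset_trans X0A AB.
Qed.

Section PrimeIdeals.
Variable R : comPzRingType.
Implicit Types (I J P Q S : set R) (a b c r s x y : R).

Lemma ideal_chain_bigcup (F : set (set R)) :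
  (forall I, F I -> is_ideal I) -> total_on F subset -> (exists I, F I) ->
  is_ideal (\bigcup_(I in F) I).
Proof.
move=> Fideal Ftot [I0 FI0]; split.
- by exists I0 => //; apply: ideal0 (Fideal _ FI0).
- move=> x y [I1 F1 I1x] [I2 F2 I2y].
  have [I12|I21] := Ftot _ _ F1 F2.
    by exists I2 => //; apply: idealD (Fideal _ F2) (I12 _ I1x) I2y.
  by exists I1 => //; apply: idealD (Fideal _ F1) I1x (I21 _ I2y).
- by move=> r x [I1 F1 I1x]; exists I1 => //; apply: idealM (Fideal _ F1) I1x.
Qed.

Lemma prime_chain_bigcap T (F : set T) (P_ : T -> set R) :
  (forall i, F i -> prime_ideal (P_ i)) ->
  total_on F (fun i j => P_ i `<=` P_ j) -> (exists i, F i) ->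
  prime_ideal (\bigcap_(i in F) P_ i).
Proof.
move=> Fprime Ftot [i0 Fi0]; have Fideal i Fi := prime_ideal_ideal (Fprime i Fi).
split; [split | |].
- by move=> i Fi; apply: ideal0 (Fideal i Fi).
- by move=> x y Px Py i Fi; apply: idealD (Fideal i Fi) (Px i Fi) (Py i Fi).
- by move=> r x Px i Fi; apply: idealM (Fideal i Fi) (Px i Fi).
- by move=> P1; apply: (prime_ideal_proper (Fprime i0 Fi0)); apply: P1.
move=> a b Pab; apply: contrapT => /not_orP [].
move=> /existsNP [i /not_implyP [Fi nPa]] /existsNP [j /not_implyP [Fj nPb]].
have [ij|ji] := Ftot _ _ Fi Fj.
  have [/nPa|/ij/nPb] // := prime_idealM (Fprime i Fi) (Pab i Fi).
have [/ji/nPa|/nPb] // := prime_idealM (Fprime j Fj) (Pab j Fj).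
Qed.

Lemma ideal_adjoin I c : is_ideal I -> is_ideal (fun x => exists p r, I p /\ x = p + r * c).
Proof.
move=> HI; split.
- by exists 0, 0; rewrite mul0r addr0; split=> //; apply: ideal0 HI.
- move=> _ _ [p [r [Ip ->]]] [q [t [Iq ->]]]; exists (p + q), (r + t).
  by rewrite mulrDl addrACA; split=> //; apply: idealD.
- move=> t _ [p [r [Ip ->]]]; exists (t * p), (t * r).
  by rewrite mulrDr mulrA; split=> //; apply: idealM.
Qed.

Lemma prime_ideal_avoiding S I :
  S 1 -> (forall a b, S a -> S b -> S (a * b)) -> is_ideal I ->
  (forall x, I x -> ~ S x) ->
  exists P, [/\ prime_ideal P, I `<=` P, (forall x, P x -> ~ S x) &
    forall J, is_ideal J -> P `<=` J -> (forall x, J x -> ~ S x) -> J `<=` P].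
Proof.
move=> S1 SM HI IS.
pose Phi X := is_ideal X /\ forall x, X x -> ~ S x.
have [|F FPhi Ftot Fne|P [[HP PS] IP Pmax]] := @Zorn_bigcup_above R Phi I.
- by [].
- split; first by apply: ideal_chain_bigcup => // X /FPhi [[]].
  by move=> x [X /FPhi [[_ XS] _] Xx]; apply: XS.
exists P; split=> //; last by move=> J HJ PJ JS; apply: Pmax.
split=> //; first by move/PS.
move=> a b Pab; apply: contrapT => /not_orP [nPa nPb].
have meetS c : ~ P c -> exists p r, P p /\ S (p + r * c).
  move=> nPc; apply: contrapT => noS; apply: nPc.
  have PJ : P `<=` (fun x => exists p r, P p /\ x = p + r * c).
    by move=> x Px; exists x, 0; rewrite mul0r addr0.
  apply: (Pmax _ PJ); first split; first exact: ideal_adjoin.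
    by move=> _ [p [r [Pp ->]]] Sx; apply: noS; exists p, r.
  by exists 0, 1; rewrite mul1r add0r; split=> //; apply: ideal0 HP.
have [p1 [r1 [Pp1 S1']]] := meetS a nPa.
have [p2 [r2 [Pp2 S2']]] := meetS b nPb.
apply: (PS _ _ (SM _ _ S1' S2')).
have -> : (p1 + r1 * a) * (p2 + r2 * b) =
    p1 * (p2 + r2 * b) + (a * r1 * p2 + r1 * r2 * (a * b)) by ring.
apply: idealD HP (idealMr _ HP Pp1) (idealD HP (idealM _ HP Pp2) (idealM _ HP Pab)).
Qed.

Lemma minimal_prime_below Q : prime_ideal Q ->
  exists P, minimal_prime P /\ P `<=` Q.
Proof.
move=> HQ; pose Phi (X : set R) := prime_ideal (~` X).
have [|F FPhi Ftot Fne|A [PhiA QA Amax]] := @Zorn_bigcup_above R Phi (~` Q).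
- by rewrite /Phi setCK.
- rewrite /Phi setC_bigcup; apply: prime_chain_bigcap => //.
    by move=> X /FPhi [].
  by move=> X Y FX FY; rewrite !setCS; have [] := Ftot _ _ FY FX; [left|right].
exists (~` A); split; last by move=> x nAx; apply: contrapT => nQx; apply/nAx/QA.
split=> // Q' HQ' Q'A x; split=> [nAx|]; last exact: Q'A.
apply: contrapT => nQ'x; apply: nAx; apply: (Amax (~` Q')) => //.
  by rewrite -setCS setCK.
by rewrite /Phi setCK.
Qed.

Lemma nilpotent_of_minimal_primes x :
  (forall P, minimal_prime P -> P x) -> nilpotent x.
Proof.
move=> xP; apply: contrapT => xNnil.
have [||||P [HP _ PS _]] := @prime_ideal_avoiding [set x ^+ k | k in setT] [set 0].
- by exists 0%N.
- by move=> _ _ [k _ <-] [l _ <-]; exists (k + l)%N => //; rewrite exprD.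
- split=> [//|_ _ -> ->|r _ ->]; [exact: addr0 | exact: mulr0].
- by move=> _ -> [k _ xk0]; apply: xNnil; exists k.
have [Q [mQ QP]] := minimal_prime_below HP.
by apply: (PS x); [apply: QP; apply: xP | exists 1%N; rewrite ?expr1].
Qed.

Lemma minimal_prime_nil_mul P x : minimal_prime P -> P x ->
  exists s, ~ P s /\ nilpotent (s * x).
Proof.
move=> [HP Pmin] Px; apply: contrapT => /forallNP noS.
pose S y := exists s k, ~ P s /\ y = s * x ^+ k.
have [||||Q [HQ _ QS _]] := @prime_ideal_avoiding S [set 0].
- by exists 1, 0%N; rewrite expr0 mulr1; split=> //; apply: prime_ideal_proper.
- move=> _ _ [s [k [nPs ->]]] [t [l [nPt ->]]]; exists (s * t), (k + l)%N.
  by rewrite exprD; split; [case/(prime_idealM HP)|ring].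
- split=> [//|_ _ -> ->|r _ ->]; [exact: addr0 | exact: mulr0].
- move=> _ -> [s [k [nPs sxk0]]]; apply: (noS s); split=> //; exists k.+1.
  suff -> : (s * x) ^+ k.+1 = s ^+ k * x * (s * x ^+ k) by rewrite -sxk0 mulr0.
  by rewrite exprMn !exprS; ring.
have QP : Q `<=` P.
  move=> y Qy; apply: contrapT => nPy; apply: (QS y Qy).
  by exists y, 0%N; rewrite expr0 mulr1.
apply: (QS x); first by apply/(Pmin Q HQ QP).
by exists 1, 1%N; rewrite expr1 mul1r; split=> //; apply: prime_ideal_proper.
Qed.

Lemma maximal_ideal_above I : is_ideal I -> ~ I 1 ->
  exists M, maximal_ideal M /\ I `<=` M.
Proof.
move=> HI nI1.
have [||||M [HM IM MS Mmax]] := @prime_ideal_avoiding [set 1] I.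
- by [].
- by move=> a b -> ->; rewrite mulr1.
- exact: HI.
- by move=> x Ix x1; apply: nI1; rewrite -x1.
exists M; split=> //; split=> [|M1|J HJ MJ]; first exact: prime_ideal_ideal.
  exact: MS M1 _.
have [J1|nJ1] := pselect (J 1); [by right | left].
move=> x; split=> [|/MJ //]; apply: Mmax => // y Jy y1.
by apply: nJ1; rewrite -y1.
Qed.

End PrimeIdeals.

Section Comaximal.
Variable R : comPzRingType.
Implicit Types (a b x : R).

Definition comaximal a b := exists p q, a * p + b * q = 1.

Lemma comaximalC a b : comaximal a b -> comaximal b a.
Proof. by move=> [p [q pq1]]; exists q, p; rewrite addrC. Qed.

Lemma comaximalXl a b k : comaximal a b -> comaximal (a ^+ k) b.
Proof.
move=> [p [q pq1]]; elim: k => [|k [p' [q' pq1']]].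
  by exists 1, 0; rewrite expr0 mulr1 mulr0 addr0.
exists (p * p'), (a * p * q' + q * a ^+ k * p' + b * q * q').
transitivity ((a * p + b * q) * (a ^+ k * p' + b * q')); first by rewrite exprS; ring.
by rewrite pq1 pq1' mulr1.
Qed.

Lemma comaximalX a b k l : comaximal a b -> comaximal (a ^+ k) (b ^+ l).
Proof. by move=> /(comaximalXl k) /comaximalC /(comaximalXl l) /comaximalC. Qed.

Lemma nilpotent_idempotent_lift x : nilpotent (x * (1 - x)) ->
  exists e, [/\ e * e = e, exists p, e = x * p & exists q, 1 - e = (1 - x) * q].
Proof.
move=> [m xm0].
have [|p [q pq1]] := @comaximalX x (1 - x) m.+1 m.+1.
  by exists 1, 1; rewrite !mulr1 subrKC.
have e1 : 1 - x ^+ m.+1 * p = (1 - x) ^+ m.+1 * q.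
  by rewrite -[in LHS]pq1 addrC addKr.
exists (x ^+ m.+1 * p); split.
- have : x ^+ m.+1 * p * (1 - x ^+ m.+1 * p) = 0.
    by rewrite e1 mulrACA -exprMn exprS xm0 mulr0 mul0r.
  by rewrite mulrBr mulr1 => /subr0_eq /esym.
- by exists (x ^+ m * p); rewrite exprS mulrA.
- by exists ((1 - x) ^+ m * q); rewrite e1 exprS mulrA.
Qed.

End Comaximal.

(* [Min_quasi_compact] fails for the zero ring, where [Min(R)] is empty but no
   [g : nat -> I] exists for an empty index type [I]; covers by inhabited
   families are all that the proof needs. *)
Definition Min_quasi_compact_inhabited (R : comPzRingType) : Prop :=
  forall (I : Type), I -> forall U : I -> (R -> Prop) -> Prop,
    (forall i, Min_open (U i)) ->
    (forall P, minimal_prime P -> exists i, U i P) ->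
    exists (n : nat) (g : nat -> I),
      forall P, minimal_prime P -> exists k, (k < n)%N /\ U (g k) P.

Lemma Min_quasi_compact_inhabitedW (R : comPzRingType) :
  Min_quasi_compact R -> Min_quasi_compact_inhabited R.
Proof. by move=> HC I _; apply: HC. Qed.

Lemma finite_Min_quasi_compact (R : comPzRingType) (n : nat) (G : nat -> set R) :
  (forall P, minimal_prime P -> exists2 k, (k < n)%N & P = G k) ->
  Min_quasi_compact_inhabited R.
Proof.
move=> HG I i0 U _ Ucov.
have /choice [g gP] : forall k, exists i, (exists i, U i (G k)) -> U i (G k).
  move=> k; have [[i Ui]|noU] := pselect (exists i, U i (G k)).
    by exists i.
  by exists i0 => /noU.
exists n, g => P mP; have [k kn PG] := HG P mP.
by exists k; split=> //; rewrite PG; apply: gP; rewrite -PG; apply: Ucov.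
Qed.

Lemma fixed_by_nilpotent_eq0 (R : comPzRingType) (w t : R) :
  nilpotent w -> w * t = t -> t = 0.
Proof.
move=> [k wk0] wt; suff <- : w ^+ k * t = t by rewrite wk0 mul0r.
by elim: k {wk0} => [|k IHk]; rewrite ?mul1r // exprSr -mulrA wt.
Qed.

Section QuasiPF.
Variable R : comPzRingType.
Hypothesis qpf : quasi_pf_ring R.
Implicit Types (M P : set R) (e f g h r x : R).

Lemma quasi_pf_minimal_prime P f : minimal_prime P -> P f ->
  exists k g h, [/\ Ann (f ^+ k) h, nilpotent (g * (1 - h)) & ~ P g].
Proof.
move=> mP Pf; have [s [nPs [k sfk0]]] := minimal_prime_nil_mul mP Pf.
have skfk : Ann (f ^+ k) (s ^+ k) by rewrite /Ann -exprMn.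
have [h [hfk shk]] := qpf skfk.
by exists k, (s ^+ k), h; split=> // /(prime_idealX mP.1).
Qed.

Lemma quasi_pf_minimal_primes_comaximal P1 P2 x :
  minimal_prime P1 -> minimal_prime P2 -> P1 x -> ~ P2 x ->
  exists h, P2 h /\ P1 (1 - h).
Proof.
move=> mP1 mP2 P1x nP2x.
have [k [g [h [hxk gh_nil nP1g]]]] := quasi_pf_minimal_prime mP1 P1x.
exists h; split.
  have : P2 (h * x ^+ k) by rewrite hxk; apply: ideal0 (prime_ideal_ideal mP2.1).
  by case/(prime_idealM mP2.1) => // /(prime_idealX mP2.1).
by have [] := prime_idealM mP1.1 (prime_ideal_nilpotent mP1.1 gh_nil).
Qed.

Lemma quasi_pf_minimal_primes_eq P1 P2 M :
  minimal_prime P1 -> minimal_prime P2 -> is_ideal M -> ~ M 1 ->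
  P1 `<=` M -> P2 `<=` M -> P1 = P2.
Proof.
move=> mP1 mP2 HM nM1 P1M P2M.
suff sub Q1 Q2 : minimal_prime Q1 -> minimal_prime Q2 ->
    Q1 `<=` M -> Q2 `<=` M -> Q1 `<=` Q2.
  by apply/seteqP; split; apply: sub.
move=> mQ1 mQ2 Q1M Q2M x Q1x; apply: contrapT => nQ2x.
have [h [Q2h Q1h']] := quasi_pf_minimal_primes_comaximal mQ1 mQ2 Q1x nQ2x.
by apply: nM1; rewrite -(subrK h 1); apply: idealD HM (Q1M _ Q1h') (Q2M _ Q2h).
Qed.

Lemma quasi_pf_finite_Min : finitely_many_maximal R ->
  exists n (G : nat -> set R),
    forall P, minimal_prime P -> exists2 k, (k < n)%N & P = G k.
Proof.
move=> [n [F HF]].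
pose below k Q := minimal_prime Q /\ Q `<=` F k.
have /choice [G GP] : forall k, exists Q, (exists Q, below k Q) -> below k Q.
  move=> k; have [[Q HQ]|noQ] := pselect (exists Q, below k Q).
    by exists Q.
  by exists set0 => /noQ.
exists n, G => P mP.
have [M [maxM PM]] := maximal_ideal_above (prime_ideal_ideal mP.1) (prime_ideal_proper mP.1).
have [k [kn MF]] := HF M maxM.
have [|mG GF] := GP k; first by exists P; split=> // x /PM /MF.
exists k => //; case: maxM => HM nM1 _.
by apply: quasi_pf_minimal_primes_eq mP mG HM nM1 PM _ => x /GF /MF.
Qed.

Lemma quasi_pf_compact_cover f : Min_quasi_compact_inhabited R ->
  exists n x, [/\ (0 < n)%N, Ann (f ^+ n) (1 - x)
    & forall P, minimal_prime P -> P x \/ ~ P f].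
Proof.
move=> HC.
pose T := {t : nat * R * R | Ann (f ^+ t.1.1) t.2 /\ nilpotent (t.1.2 * (1 - t.2))}.
pose gen (i : option T) := if i is Some t then (sval t).1.2 else f.
have Uopen i : Min_open (fun P => ~ P (gen i)).
  by exists (fun a => a = gen i) => P _; split=> [|[_ [-> //]]]; exists (gen i).
have Ucov P : minimal_prime P -> exists i, ~ P (gen i).
  move=> mP; have [Pf|] := pselect (P f); last by exists None.
  have [k [g [h [hfk gh_nil nPg]]]] := quasi_pf_minimal_prime mP Pf.
  by exists (Some (exist _ (k, g, h) (conj hfk gh_nil))).
have [N [i Hi]] := HC _ None _ Uopen Ucov.
pose k j := if i j is Some t then (sval t).1.1 else 0%N.
pose h j := if i j is Some t then (sval t).2 else 0.
pose n := (\max_(j < N) k j).+1.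
have hfn j : (j < N)%N -> Ann (f ^+ n) (h j).
  move=> jN; rewrite /h; case E: (i j) => [[[[kj g] hj] Ht]|]; last exact: mul0r.
  have [hfk _] := Ht.
  have kn : (kj <= n)%N.
    by apply: leqW; have := @leq_bigmax _ (fun j : 'I_N => k j) (Ordinal jN); rewrite /= /k E.
  by rewrite /Ann -(subnKC kn) exprD mulrA hfk mul0r.
exists n, (\prod_(j < N) (1 - h j)); split=> //.
  suff xfn : \prod_(j < N) (1 - h j) * f ^+ n = f ^+ n.
    by rewrite /Ann mulrBl mul1r xfn subrr.
  elim/big_rec: _ => [|j y _ IHy]; first exact: mul1r.
  by rewrite -mulrA IHy mulrBl mul1r hfn // subr0.
move=> P mP; have [j [jN]] := Hi P mP; rewrite /gen.
case E: (i j) => [[[[kj g] hj] Ht]|]; last by right.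
move=> /= nPg.
have [_ gh_nil] := Ht.
left; rewrite (bigD1 (Ordinal jN)) //= {1}/h E /=.
apply: idealMr (prime_ideal_ideal mP.1) _.
by have [] := prime_idealM mP.1 (prime_ideal_nilpotent mP.1 gh_nil).
Qed.

Lemma quasi_pf_idempotent_split f n e : e * e = e -> e * f ^+ n = f ^+ n ->
  (forall P, minimal_prime P -> P e \/ ~ P f) -> pideal_split f n.
Proof.
move=> ee efn ePf; exists e; split=> // r rfn.
have tfn : Ann (r * e) (f ^+ n) by rewrite /Ann mulrCA [f ^+ n * e]mulrC efn.
have [h [hre fh_nil]] := qpf tfn.
have w_nil : nilpotent (e * (1 - h)).
  apply: nilpotent_of_minimal_primes => P mP.
  have [Pe|nPf] := ePf P mP; first exact: idealMr (prime_ideal_ideal mP.1) Pe.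
  apply: idealM (prime_ideal_ideal mP.1) _.
  by have [/(prime_idealX mP.1)|] := prime_idealM mP.1 (prime_ideal_nilpotent mP.1 fh_nil).
apply: (fixed_by_nilpotent_eq0 w_nil).
by rewrite -mulrA mulrBl mul1r hre subr0 mulrCA ee.
Qed.

Lemma quasi_pf_pideal_split f : Min_quasi_compact_inhabited R ->
  exists n, (0 < n)%N /\ pideal_split f n.
Proof.
move=> HC; have [n [x [n_gt0 xfn xPf]]] := quasi_pf_compact_cover f HC.
have [|e [ee [p ep] [q e1]]] := nilpotent_idempotent_lift (x := x).
  apply: nilpotent_of_minimal_primes => P mP.
  have [Px|nPf] := xPf P mP; first exact: idealMr (prime_ideal_ideal mP.1) Px.
  apply: idealM (prime_ideal_ideal mP.1) _.
  have : P ((1 - x) * f ^+ n) by rewrite xfn; apply: ideal0 (prime_ideal_ideal mP.1).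
  by case/(prime_idealM mP.1) => // /(prime_idealX mP.1).
exists n; split=> //; apply: quasi_pf_idempotent_split ee _ _.
  have -> : e = 1 - (1 - x) * q by rewrite -e1 subKr.
  by rewrite mulrBl mul1r mulrAC xfn mul0r subr0.
move=> P mP; have [Px|] := xPf P mP; [left | by right].
by rewrite ep; apply: idealMr (prime_ideal_ideal mP.1) Px.
Qed.

End QuasiPF.

Theorem corollary5p5 (R : comPzRingType) :
  finitely_many_maximal R \/ Min_quasi_compact R ->
  [/\ (GPP_ring R <-> GPF_ring R), (GPF_ring R <-> quasi_pf_ring R)
    & (GPP_ring R <-> quasi_pf_ring R)].
Proof.
move=> fin_or_compact.
have quasi_pf_GPP : quasi_pf_ring R -> GPP_ring R.
  move=> qpf f; have HC : Min_quasi_compact_inhabited R.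
    case: fin_or_compact => [/(quasi_pf_finite_Min qpf) [n [G HG]]|].
      exact: finite_Min_quasi_compact HG.
    exact: Min_quasi_compact_inhabitedW.
  have [n [n_gt0 split_fn]] := quasi_pf_pideal_split qpf f HC.
  by exists n; split=> //; apply: pideal_split_projective.
have gpp_gpf := @GPP_GPF R; have gpf_qpf := @GPF_quasi_pf R.
by split; split; auto.
Qed.
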